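(* In the setting below, $$N=\lim_{t\to\infty}(S+tP)^{-1}=\frac1\alpha Y-\frac{\ell}{\alpha(\alpha+\ell\gamma)}\,yy^\top.$$
   Context: Let $n\ge3$, $\ell>0$, $\alpha\ge(n-2)\ell$, $S=\alpha I_n+\ell\mathbf{1}_n\mathbf{1}_n^\top$. For a real matrix $P$, $\Delta_i(P)=|P_{ii}|-\sum_{j\ne i}|P_{ij}|$. A signless Laplacian is a real symmetric $n\times n$ matrix $P$ with $P_{ij}\in\{0,1\}$ for $i\ne j$, $P_{ii}\ge0$, and $\Delta_i(P)\in\{0,2\}$ for all $i$; its graph $G$ has vertex set $\{1,\dots,n\}$, an edge $\{i,j\}$ ($i\ne j$) whenever $P_{ij}=1$, and a self-loop $\{i,i\}$ whenever $\Delta_i(P)=2$ (graphs with self-loops are not bipartite). Relabel vertices so that the bipartite components $G_1,\dots,G_r$ come first, each occupying consecutive vertices with one bipartition class (size $p_i$) listed first and then the other (size $q_i$), and the remaining $s=n-\sum_{i=1}^r(p_i+q_i)$ vertices lie in non-bipartite components. Define $\gamma=\sum_{i=1}^r\frac{(p_i-q_i)^2}{p_i+q_i}$, $$y^\top=\Big(\tfrac{p_1-q_1}{p_1+q_1}(\mathbf{1}_{p_1}^\top,-\mathbf{1}_{q_1}^\top),\dots,\tfrac{p_r-q_r}{p_r+q_r}(\mathbf{1}_{p_r}^\top,-\mathbf{1}_{q_r}^\top),\,0\cdot\mathbf{1}_s^\top\Big),$$ and $Y$ the block-diagonal matrix with diagonal blocks $\frac{1}{p_i+q_i}\begin{pmatrix}\mathbf{1}_{p_i}\mathbf{1}_{p_i}^\top&-\mathbf{1}_{p_i}\mathbf{1}_{q_i}^\top\\-\mathbf{1}_{q_i}\mathbf{1}_{p_i}^\top&\mathbf{1}_{q_i}\mathbf{1}_{q_i}^\top\end{pmatrix}$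 for $i=1,\dots,r$, followed by the $s\times s$ zero block. *)

From HB Require Import structures.
From mathcomp Require Import all_boot all_order all_algebra.
Set Implicit Arguments. Unset Strict Implicit. Unset Printing Implicit Defensive.
Import Order.TTheory GRing.Theory Num.Theory.
Local Open Scope ring_scope.

Section Defs.
Variables (R : realFieldType) (n : nat).

Definition Delta (P : 'M[R]_n) (i : 'I_n) : R :=
  `|P i i| - \sum_(j < n | j != i) `|P i j|.

Definition signless_laplacian (P : 'M[R]_n) : Prop :=
  [/\ P^T = P,
      (forall i j : 'I_n, i != j -> P i j = 0 \/ P i j = 1),
      (forall i : 'I_n, 0 <= P i i) &
      (forall i : 'I_n, Delta P i = 0 \/ Delta P i = 2)].

(* the graph G of P: edges and self-loops *)
Definition gadj (P : 'M[R]_n) : rel 'I_n := fun i j => (i != j) && (P i j == 1).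
Definition gloop (P : 'M[R]_n) (i : 'I_n) : bool := Delta P i == 2.

(* parity double cover: a step along an edge or a self-loop flips the parity bit.
   connect (pcover P) (i,false) (j,b) <-> there is a walk from i to j in G
   (self-loops allowed as steps) whose length has parity b. *)
Definition pcover (P : 'M[R]_n) : rel ('I_n * bool) := fun u v =>
  (v.2 == ~~ u.2) && (gadj P u.1 v.1 || ((u.1 == v.1) && gloop P u.1)).

(* the component of i is bipartite iff it contains no closed walk of odd length
   (a self-loop being an odd closed walk) *)
Definition bip (P : 'M[R]_n) (i : 'I_n) : bool :=
  ~~ connect (pcover P) (i, false) (i, true).

(* sizes of the bipartition class of i and of the other class (meaningful when bip P i) *)
Definition pcl (P : 'M[R]_n) (i : 'I_n) : nat :=
  #|[set j | connect (pcover P) (i, false) (j, false)]|.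
Definition qcl (P : 'M[R]_n) (i : 'I_n) : nat :=
  #|[set j | connect (pcover P) (i, false) (j, true)]|.

Definition gammaP (P : 'M[R]_n) : R :=
  \sum_(i < n | bip P i && (fingraph.root (gadj P) i == i))
     ((pcl P i)%:R - (qcl P i)%:R) ^+ 2 / ((pcl P i)%:R + (qcl P i)%:R).

Definition yvec (P : 'M[R]_n) : 'cV[R]_n :=
  \col_i (if bip P i
          then ((pcl P i)%:R - (qcl P i)%:R) / ((pcl P i)%:R + (qcl P i)%:R)
          else 0).

Definition Ymat (P : 'M[R]_n) : 'M[R]_n :=
  \matrix_(i, j)
    (if bip P i && connect (gadj P) i j
     then (if connect (pcover P) (i, false) (j, false) then 1 else -1)
            / ((pcl P i)%:R + (qcl P i)%:R)
     else 0).

Definition Smat (alpha l : R) : 'M[R]_n := alpha%:M + l *: const_mx 1.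

Definition mx_lim_infty (f : R -> 'M[R]_n) (N : 'M[R]_n) : Prop :=
  forall eps : R, 0 < eps -> exists T : R, forall t : R, T < t ->
    forall i j : 'I_n, `|f t i j - N i j| < eps.

End Defs.

From HB Require Import structures.
From mathcomp Require Import all_boot all_order all_algebra.
From mathcomp Require Import ring lra.
Import Order.TTheory GRing.Theory Num.Theory.
Local Open Scope ring_scope.
Set Implicit Arguments. Unset Strict Implicit. Unset Printing Implicit Defensive.

(* Y is the orthogonal projection onto the span of the signed indicator vectors
   of the bipartite components of G, i.e. onto ker P.  The file proceeds in
   three steps, after some general facts about sums of squares.
   1. Combinatorics on the parity double cover of G (a walk from (i,false) to
      (j,b) is a walk of G of parity b): Y = Y^T = Y^2, Y 1 = y, 1^T y = gamma
      and P Y = 0; hence P N = 0 and Y S N = Y.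
   2. Analysis: x^T P x is a sum of squares bounding every walk increment of x
      lifted to the double cover, so |x - Yx|^2 = O(x^T P x).  With the energy
      identity x.(S + tP)x = alpha |x|^2 + l (1.x)^2 + t x^T P x this shows that
      (S + tP) X = E with Y E = 0 forces alpha t X_ik^2 <= C |E_(.k)|^2.
   3. Since P N = 0, (S + tP)((S + tP)^-1 - N) = 1 - S N, which Y annihilates by
      step 1, so by step 2 the error (S + tP)^-1 - N is O(1/sqrt t). *)

Lemma connect_ind (T : finType) (e : rel T) (Q : T -> T -> Prop) :
  (forall x, Q x x) -> (forall x y z, Q x y -> e y z -> Q x z) ->
  forall x y, connect e x y -> Q x y.
Proof.
move=> Q0 QS x y /connectP [p pth ->].
elim/last_ind: p pth => [|p z IH] //=.
rewrite rcons_path last_rcons => /andP [pth ez].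
exact: QS (IH pth) ez.
Qed.

Lemma cauchy_schwarz (R : realFieldType) (I : finType) (p : pred I) (a b : I -> R) :
  (\sum_(i | p i) a i * b i) ^+ 2 <= (\sum_(i | p i) a i ^+ 2) * \sum_(i | p i) b i ^+ 2.
Proof.
set A := \sum_(i | p i) a i ^+ 2; set B := \sum_(i | p i) b i ^+ 2.
set D := \sum_(i | p i) a i * b i.
have AB1 : A * B = \sum_(i | p i) \sum_(k | p k) a i ^+ 2 * b k ^+ 2 by rewrite big_distrlr.
have AB2 : A * B = \sum_(i | p i) \sum_(k | p k) a k ^+ 2 * b i ^+ 2.
  rewrite mulrC big_distrlr; apply: eq_bigr => i _; apply: eq_bigr => k _; exact: mulrC.
have DD : D ^+ 2 = \sum_(i | p i) \sum_(k | p k) (a i * b i) * (a k * b k).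
  by rewrite expr2 big_distrlr.
have expand : \sum_(i | p i) \sum_(k | p k) (a i * b k - a k * b i) ^+ 2 =
    2 * (A * B - D ^+ 2).
  have -> : 2 * (A * B - D ^+ 2) = A * B + A * B - 2 * D ^+ 2 by ring.
  rewrite {1}AB1 AB2 DD mulr_sumr -big_split -sumrB.
  apply: eq_bigr => i _; rewrite mulr_sumr -big_split -sumrB.
  by apply: eq_bigr => k _ /=; ring.
rewrite -subr_ge0 -(pmulr_rge0 _ (ltr0Sn R 1)) -expand.
by apply: sumr_ge0 => i _; apply: sumr_ge0 => k _; apply: sqr_ge0.
Qed.

Lemma sqr_sum_le (R : realFieldType) (I : finType) (p : pred I) (a : I -> R) (K : R) :
  (forall i, p i -> a i ^+ 2 <= K) ->
  (\sum_(i | p i) a i) ^+ 2 <= (\sum_(i | p i) 1) ^+ 2 * K.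
Proof.
move=> aK; have := cauchy_schwarz p a (fun=> 1).
under eq_bigr do rewrite mulr1; under [X in _ * X]eq_bigr do rewrite expr1n.
move/le_trans; apply; rewrite expr2 -mulrA mulrC.
apply: ler_wpM2l; first by apply: sumr_ge0 => i _; apply: ler01.
by rewrite big_distrl; apply: ler_sum => i pi /=; rewrite mul1r aK.
Qed.

Lemma sqr_add_le (R : realFieldType) (a b : R) : (a + b) ^+ 2 <= 2 * a ^+ 2 + 2 * b ^+ 2.
Proof. by rewrite -subr_ge0 (_ : _ - _ = (a - b) ^+ 2) ?sqr_ge0 //; ring. Qed.

Lemma sqr_le_sum (R : realFieldType) (I : finType) (x : I -> R) i :
  x i ^+ 2 <= \sum_j x j ^+ 2.
Proof. by rewrite (bigD1 i) //= lerDl; apply: sumr_ge0 => j _; apply: sqr_ge0. Qed.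

Lemma sym_annihilated_dot (R : comPzRingType) (n : nat) (Y : 'M[R]_n) (x e : 'I_n -> R) :
  Y^T = Y -> (forall i, \sum_j Y i j * e j = 0) ->
  \sum_j (\sum_i Y j i * x i) * e j = 0.
Proof.
move=> Y_sym Ye; under eq_bigr do rewrite mulr_suml; rewrite exchange_big /=.
apply: big1 => i _; transitivity (x i * \sum_j Y i j * e j); last by rewrite Ye mulr0.
by rewrite mulr_sumr; apply: eq_bigr => j _; rewrite -{1}Y_sym mxE; ring.
Qed.

(* The scalar inequality behind the resolvent bound (a is the energy x.(S+tP)x,
   V = |x|^2, Q = x^T P x): from alpha V <= a, t Q <= a and a^2 <= K Q,
   t a^2 <= K t Q <= K a, hence t a <= K and alpha t V <= K. *)
Lemma energy_inequality (R : realFieldType) (alpha t a V Q K : R) :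
  0 < alpha -> 0 < t -> 0 <= V -> 0 <= Q -> 0 <= K ->
  alpha * V <= a -> t * Q <= a -> a ^+ 2 <= K * Q -> alpha * t * V <= K.
Proof.
move=> ha ht hV hQ hK aV aQ aK.
have tV : t * (alpha * V) <= t * a := ler_wpM2l (ltW ht) aV.
suff : t * a <= K by lra.
have [a_le0 | a_gt0] := lerP a 0; first by nra.
rewrite -(ler_pM2r a_gt0); have := ler_wpM2l hK aQ.
have := ler_wpM2l (ltW ht) aK; rewrite expr2; lra.
Qed.

Section BipartiteComponents.
Variables (R : realFieldType) (n : nat) (P : 'M[R]_n).
Hypothesis P_sym : P^T = P.

Notation pcc := (connect (pcover P)).
Notation conn := (connect (gadj P)).

Lemma entry_sym i j : P i j = P j i.
Proof. by rewrite -{1}P_sym mxE. Qed.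

Lemma gadj_sym : symmetric (gadj P).
Proof. by move=> i j; rewrite /gadj eq_sym entry_sym. Qed.

Lemma conn_sym : connect_sym (gadj P).
Proof. exact: sym_connect_sym gadj_sym. Qed.

Lemma pcc_sym : connect_sym (pcover P).
Proof.
apply: sym_connect_sym; move=> [i b] [j c]; rewrite /pcover /= gadj_sym.
have -> : (i == j) && gloop P i = (j == i) && gloop P j.
  by rewrite eq_sym; case: eqP => [->|].
by case: b; case: c.
Qed.

Lemma pcc_flip i b j c : pcc (i, ~~ b) (j, ~~ c) = pcc (i, b) (j, c).
Proof.
have flip : forall u v, pcc u v -> pcc (u.1, ~~ u.2) (v.1, ~~ v.2).
  apply: connect_ind => [x|x y z IH yz]; first exact: connect0.
  apply: connect_trans IH (connect1 _).
  by move: yz; rewrite /pcover /=; case: y.2; case: z.2.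
by apply/idP/idP => /flip; rewrite /= ?negbK.
Qed.

Lemma pcc_proj : forall u v, pcc u v -> conn u.1 v.1.
Proof.
apply: connect_ind => [x|x y z xy /andP [_ /orP [yz| /andP [/eqP <- _]]]].
- exact: connect0.
- exact: connect_trans xy (connect1 yz).
- exact: xy.
Qed.

Lemma conn_lift : forall i j, conn i j -> exists c, pcc (i, false) (j, c).
Proof.
apply: connect_ind => [x|x y z [c xy] yz]; first by exists false.
by exists (~~ c); apply: connect_trans xy (connect1 _); rewrite /pcover /= eqxx yz.
Qed.

Lemma pcc_shift i j k c b : pcc (i, false) (j, c) ->
  pcc (j, false) (k, b) = pcc (i, false) (k, b (+) c).
Proof.
case: c => ij; last by rewrite addbF (same_connect pcc_sym ij).
by rewrite addbT -(pcc_flip j false k b) /= (same_connect pcc_sym ij).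
Qed.

Lemma bip_parity i j : bip P i -> conn i j ->
  pcc (i, false) (j, true) = ~~ pcc (i, false) (j, false).
Proof.
move=> bi /conn_lift [c ij].
case E0: (pcc (i, false) (j, false)); case E1: (pcc (i, false) (j, true)) => //.
- have := pcc_shift i false E1; rewrite (pcc_shift i false E0) /= connect0.
  by move: bi; rewrite /bip => /negbTE ->.
- by case: c ij; rewrite ?E0 ?E1.
Qed.

Lemma bip_conn i j : conn i j -> bip P i = bip P j.
Proof.
have bip1 x y : conn x y -> bip P x -> bip P y.
  move=> xy bx; have [c xyc] := conn_lift xy.
  rewrite /bip (pcc_shift y true xyc).
  case: c xyc => /= xyc; first by rewrite (bip_parity bx xy) in xyc.
  by rewrite (bip_parity bx xy) negbK.
by move=> ij; apply/idP/idP; apply: bip1; rewrite // conn_sym.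
Qed.

Definition comp_size i : R := (pcl P i)%:R + (qcl P i)%:R.
Definition comp_diff i : R := (pcl P i)%:R - (qcl P i)%:R.

Definition side_sign i j : R := if pcc (i, false) (j, false) then 1 else -1.

Lemma class_sizes_shift i j c : pcc (i, false) (j, c) ->
  pcl P j = (if c then qcl P i else pcl P i) /\
  qcl P j = (if c then pcl P i else qcl P i).
Proof.
move=> ij; rewrite /pcl /qcl.
have E b : #|[set k | pcc (j, false) (k, b)]| = #|[set k | pcc (i, false) (k, b (+) c)]|.
  by apply: eq_card => k; rewrite !inE (pcc_shift k b ij).
by rewrite !E; case: c {E} ij.
Qed.

Lemma comp_size_conn i j : conn i j -> comp_size j = comp_size i.
Proof.
rewrite /comp_size => /conn_lift [c /class_sizes_shift [-> ->]].
by case: c; rewrite // addrC.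
Qed.

(* i lies in its own class, so |C| > 0. *)
Lemma comp_size_gt0 i : 0 < comp_size i.
Proof.
have : (0 < pcl P i)%N.
  by rewrite /pcl card_gt0; apply/set0Pn; exists i; rewrite inE connect0.
by rewrite /comp_size; case: (pcl P i) => // k _; rewrite -natrD ltr0n addSn.
Qed.

Lemma side_sign_walk i j c : bip P i -> pcc (i, false) (j, c) ->
  side_sign i j = if c then -1 else 1.
Proof.
move=> bi ij; rewrite /side_sign; case: c ij => ij; last by rewrite ij.
by rewrite -[pcc _ _]negbK -(bip_parity bi (pcc_proj ij)) ij.
Qed.

Lemma comp_diff_conn i j : bip P i -> conn i j ->
  comp_diff j = side_sign i j * comp_diff i.
Proof.
move=> bi /conn_lift [c ij]; rewrite (side_sign_walk bi ij).
rewrite /comp_diff; have [-> ->] := class_sizes_shift ij.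
by case: c {ij}; rewrite ?mulN1r ?mul1r ?opprB.
Qed.

(* Side signs compose like the parities of concatenated walks. *)
Lemma side_signM j i k : bip P j -> conn j i -> conn j k ->
  side_sign j i * side_sign i k = side_sign j k.
Proof.
move=> bj ji jk; have [c jic] := conn_lift ji; have [d jkd] := conn_lift jk.
rewrite (side_sign_walk bj jic) (side_sign_walk bj jkd).
have bi : bip P i by rewrite -(bip_conn ji).
have ikd : pcc (i, false) (k, d (+) c).
  by rewrite (pcc_shift k _ jic) -addbA addbb addbF.
rewrite (side_sign_walk bi ikd).
by case: c d {jic jkd ikd} => -[] /=; rewrite ?mulN1r ?opprK ?mul1r.
Qed.

Lemma side_sign_edge k j i : bip P k -> conn k j -> gadj P j i ->
  side_sign k i = - side_sign k j.
Proof.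
move=> bk /conn_lift [c kj] ji.
have ki : pcc (k, false) (i, ~~ c).
  by apply: connect_trans kj (connect1 _); rewrite /pcover /= eqxx ji.
rewrite (side_sign_walk bk kj) (side_sign_walk bk ki).
by case: c {kj ki}; rewrite ?opprK.
Qed.

(* A self-loop is an odd closed walk, so bipartite components have none. *)
Lemma bip_no_loop k j : bip P k -> conn k j -> ~~ gloop P j.
Proof.
move=> bk kj; apply/negP => lj; have [c kjc] := conn_lift kj.
have kjc' : pcc (k, false) (j, ~~ c).
  by apply: connect_trans kjc (connect1 _); rewrite /pcover /= !eqxx lj orbT.
have := bip_parity bk kj.
by case: c kjc kjc' => /= -> ->.
Qed.

Lemma sum_comp i (F : 'I_n -> R) : bip P i ->
  \sum_(j | conn i j) F j =
  \sum_(j | pcc (i, false) (j, false)) F j + \sum_(j | pcc (i, false) (j, true)) F j.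
Proof.
move=> bi; rewrite (bigID (fun j => pcc (i, false) (j, false))) /=.
congr (_ + _); apply: eq_bigl => j.
  by apply/andb_idl => /pcc_proj.
case ij: (conn i j) => /=; first by rewrite (bip_parity bi ij).
by apply/esym/negP => /pcc_proj; rewrite /= ij.
Qed.

Lemma sum_card (p : pred 'I_n) : \sum_(j | p j) (1 : R) = #|[set j | p j]|%:R.
Proof.
rewrite (eq_bigl (fun j => j \in [set j | p j])) ?sumr_const // => j.
by rewrite inE.
Qed.

Lemma sum_comp_one i : bip P i -> \sum_(j | conn i j) (1 : R) = comp_size i.
Proof. by move=> bi; rewrite sum_comp // !sum_card. Qed.

Lemma sum_side_sign i : bip P i -> \sum_(j | conn i j) side_sign i j = comp_diff i.
Proof.
move=> bi; rewrite sum_comp // (eq_bigr (fun=> 1)) => [|j ij]; last first.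
  by rewrite /side_sign ij.
rewrite [X in _ + X](eq_bigr (fun=> -1)) => [|j ij]; last first.
  by rewrite (side_sign_walk bi ij).
by rewrite sumrN !sum_card.
Qed.

Lemma YmatE j k :
  Ymat P j k = if bip P j && conn j k then side_sign j k / comp_size j else 0.
Proof. by rewrite mxE. Qed.

Lemma Ymat_row_sum j (F : 'I_n -> R) : \sum_i Ymat P j i * F i =
  if bip P j then (\sum_(i | conn j i) side_sign j i * F i) / comp_size j else 0.
Proof.
case bj: (bip P j); last by apply: big1 => i _; rewrite YmatE bj mul0r.
rewrite (bigID (conn j)) /= [X in _ + X]big1 ?addr0 => [|i /negbTE ji]; last first.
  by rewrite YmatE bj ji mul0r.
by rewrite big_distrl; apply: eq_bigr => i ji; rewrite YmatE bj ji /= mulrAC.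
Qed.

Lemma Ymat_sym : (Ymat P)^T = Ymat P.
Proof.
apply/matrixP => j k; rewrite mxE !YmatE [conn j k]conn_sym.
case kj: (conn k j); rewrite ?andbF //= (bip_conn kj).
by case: (bip P j) => //=; rewrite /side_sign pcc_sym (comp_size_conn kj).
Qed.

Lemma Ymat_idem : Ymat P *m Ymat P = Ymat P.
Proof.
apply/matrixP => j k; rewrite mxE Ymat_row_sum YmatE.
case bj: (bip P j) => //=.
have cj := comp_size_gt0 j.
case jk: (conn j k); last first.
  rewrite big1 ?mul0r // => i ji; rewrite YmatE -(bip_conn ji) bj.
  by rewrite -(same_connect conn_sym ji) jk mulr0.
rewrite (eq_bigr (fun=> 1 * (side_sign j k / comp_size j))) => [|i ji]; last first.
  rewrite YmatE -(bip_conn ji) bj -(same_connect conn_sym ji) jk /=.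
  by rewrite (comp_size_conn ji) mulrA side_signM // mul1r.
rewrite -big_distrl /= sum_comp_one //; field.
by rewrite gt_eqF.
Qed.

(* Y 1 = y: the signed average of 1 over C is (p - q) / (p + q). *)
Lemma Ymat_ones : Ymat P *m const_mx 1 = yvec P.
Proof.
apply/matrixP => j z.
have -> : (Ymat P *m const_mx 1) j z = \sum_i Ymat P j i * 1.
  by rewrite mxE; apply: eq_bigr => i _; rewrite [const_mx _ _ _]mxE.
rewrite Ymat_row_sum /yvec mxE; case: ifP => // bj.
by under eq_bigr do rewrite mulr1; rewrite sum_side_sign.
Qed.

(* The entries of y sum to gamma: group the vertices by the root of their component. *)
Lemma sum_yvec : \sum_j yvec P j 0 = gammaP P.
Proof.
rewrite /gammaP big_mkcondl.
rewrite (partition_big (fingraph.root (gadj P)) (fun r => fingraph.root (gadj P) r == r)) /=;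
  last by move=> j _; rewrite (root_root conn_sym).
apply: eq_bigr => r /eqP rootr.
rewrite (eq_bigl (conn r)) => [|j]; last first.
  by rewrite /= -{1}rootr (root_connect conn_sym) conn_sym.
case br: (bip P r); last by apply: big1 => j rj; rewrite mxE -(bip_conn rj) br.
rewrite (eq_bigr (fun j => side_sign r j * (comp_diff r / comp_size r))) => [|j rj].
  by rewrite -big_distrl /= sum_side_sign // mulrA -expr2.
rewrite mxE -(bip_conn rj) br -/(comp_diff j) -/(comp_size j).
by rewrite (comp_diff_conn br rj) (comp_size_conn rj) mulrA.
Qed.

End BipartiteComponents.

Section QuadraticForm.
Variables (R : realFieldType) (n : nat) (P : 'M[R]_n).
Hypotheses (P_sym : P^T = P) (P_ge0 : forall i j, 0 <= P i j)
           (Delta_ge0 : forall i, 0 <= Delta P i).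

Notation pcc := (connect (pcover P)).
Notation conn := (connect (gadj P)).

Definition qform (x : 'I_n -> R) : R := \sum_i \sum_j x i * P i j * x j.

Lemma DeltaE i : Delta P i = P i i - \sum_(j | j != i) P i j.
Proof.
rewrite /Delta ger0_norm // (eq_bigr (fun j => P i j)) // => j _.
by rewrite ger0_norm.
Qed.

Definition qterm (x : 'I_n -> R) i : R :=
  Delta P i * x i ^+ 2 + \sum_(j | j != i) 2^-1 * P i j * (x i + x j) ^+ 2.

Lemma qform_decomp x : qform x = \sum_i qterm x i.
Proof.
pose half_sum (F : 'I_n -> 'I_n -> R) := \sum_i \sum_j 2^-1 * P i j * F i j.
have swap : half_sum (fun _ j => x j ^+ 2) = half_sum (fun i _ => x i ^+ 2).
  rewrite /half_sum exchange_big /=; apply: eq_bigr => i _; apply: eq_bigr => j _.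
  by rewrite (entry_sym P_sym).
have -> : qform x = half_sum (fun i j => (x i + x j) ^+ 2)
    - half_sum (fun i _ => x i ^+ 2) - half_sum (fun _ j => x j ^+ 2).
  rewrite /half_sum -!sumrB; apply: eq_bigr => i _ /=; rewrite -!sumrB.
  by apply: eq_bigr => j _ /=; field.
rewrite swap -addrA -opprD /half_sum -big_split -sumrB; apply: eq_bigr => i _ /=.
have -> : \sum_j 2^-1 * P i j * x i ^+ 2 =
    2^-1 * (P i i + \sum_(j | j != i) P i j) * x i ^+ 2.
  by rewrite -mulr_suml -mulr_sumr (bigD1 i).
by rewrite /qterm DeltaE (bigD1 i) //=; field.
Qed.

(* Diagonal dominance and P >= 0 make every term, hence x^T P x, nonnegative. *)
Lemma qterm_ge0 x i : 0 <= qterm x i.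
Proof.
apply: addr_ge0; first by rewrite mulr_ge0 ?sqr_ge0.
apply: sumr_ge0 => j _; rewrite mulr_ge0 ?sqr_ge0 // mulr_ge0 //.
by rewrite invr_ge0 ler0n.
Qed.

Lemma qform_ge_qterm x i : qterm x i <= qform x.
Proof.
rewrite qform_decomp (bigD1 i) //= lerDl.
by apply: sumr_ge0 => j _; apply: qterm_ge0.
Qed.

Lemma qform_ge0 x : 0 <= qform x.
Proof. by rewrite qform_decomp; apply: sumr_ge0 => i _; apply: qterm_ge0. Qed.

(* A self-loop at a (Delta_a = 2) forces x_a to be small ... *)
Lemma qform_loop x a : gloop P a -> 2 * x a ^+ 2 <= qform x.
Proof.
move=> /eqP loop_a; apply: le_trans (qform_ge_qterm x a); rewrite /qterm loop_a lerDl.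
apply: sumr_ge0 => j _; rewrite mulr_ge0 ?sqr_ge0 // mulr_ge0 //.
by rewrite invr_ge0 ler0n.
Qed.

(* ... and an edge ab (P_ab = 1) forces x_a + x_b to be small. *)
Lemma qform_edge x a b : gadj P a b -> (x a + x b) ^+ 2 <= 2 * qform x.
Proof.
move=> /andP [ab /eqP Pab]; have := qform_ge_qterm x a.
rewrite /qterm (bigD1 b) 1?eq_sym //= Pab mulr1.
have h1 : 0 <= Delta P a * x a ^+ 2 by rewrite mulr_ge0 ?sqr_ge0.
have h2 : 0 <= \sum_(j | (j != a) && (j != b)) 2^-1 * P a j * (x a + x j) ^+ 2.
  apply: sumr_ge0 => j _; rewrite mulr_ge0 ?sqr_ge0 // mulr_ge0 //.
  by rewrite invr_ge0 ler0n.
lra.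
Qed.

Definition lift_val (x : 'I_n -> R) (u : 'I_n * bool) : R :=
  if u.2 then - x u.1 else x u.1.

Lemma step_bound x u v : pcover P u v -> (lift_val x v - lift_val x u) ^+ 2 <= 2 * qform x.
Proof.
case: u v => a b [c d] /andP [/= /eqP -> ac].
have -> : (lift_val x (c, ~~ b) - lift_val x (a, b)) ^+ 2 = (x a + x c) ^+ 2.
  by rewrite /lift_val /=; case: b => /=; ring.
case/orP: ac => [/qform_edge // | /andP [/eqP <- /qform_loop]].
by rewrite (_ : (x a + x a) ^+ 2 = 2 * (2 * x a ^+ 2)) ?ler_pM2l //; ring.
Qed.

Lemma path_bound x u p : path (pcover P) u p ->
  (lift_val x (last u p) - lift_val x u) ^+ 2 <= 4 ^+ size p * (2 * qform x).
Proof.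
have Q0 := qform_ge0 x.
elim: p u => [|v p IH] u /=; first by rewrite subrr expr0n mul1r mulr_ge0.
move=> /andP [uv pth]; have A := IH v pth; have B := step_bound x uv.
have c1 : 1 <= (4 : R) ^+ size p by rewrite exprn_ege1 // ler1n.
have -> : lift_val x (last v p) - lift_val x u =
    (lift_val x (last v p) - lift_val x v) + (lift_val x v - lift_val x u).
  by rewrite addrA subrK.
apply: le_trans (sqr_add_le _ _) _; rewrite [(4 : R) ^+ (size p).+1]exprS.
move: A B c1; set c := (4 : R) ^+ size p; set Q := qform x => A B c1.
have cQ : 2 * Q <= c * (2 * Q) by rewrite ler_peMl // mulr_ge0.
lra.
Qed.

Definition walk_const : R := 2 * 4 ^+ (2 * n).

(* Across any walk of the double cover the lifted value changes by a
   bounded multiple of sqrt(x^T P x): shorten the walk to at most 2n steps. *)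
Lemma walk_bound x u v : pcc u v ->
  (lift_val x v - lift_val x u) ^+ 2 <= walk_const * qform x.
Proof.
move=> /connectP [p pth ->]; have [p' pth' uniq_p' _] := shortenP pth.
apply: le_trans (path_bound x pth') _.
have size_p' : (size p' <= 2 * n)%N.
  have := max_card (mem (u :: p')).
  move/card_uniqP: uniq_p' => ->; rewrite card_prod card_ord card_bool /= mulnC.
  exact: ltnW.
rewrite /walk_const mulrCA -mulrA ler_pM2l // ler_wpM2r ?qform_ge0 //.
by rewrite ler_weXn2l // ler1n.
Qed.

(* x agrees with its signed component average Yx up to O(sqrt(x^T P x)):
   on a bipartite component every x_j - s_ji x_i is a walk increment of the
   lifted values, and on a non-bipartite one x_j itself is half of one. *)
Lemma residual_bound x j :
  (x j - \sum_i Ymat P j i * x i) ^+ 2 <= walk_const * qform x.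
Proof.
rewrite Ymat_row_sum; case bj: (bip P j); last first.
  have := walk_bound x (negbFE bj); rewrite /lift_val /= subr0.
  by have := sqr_ge0 (x j); lra.
have cj := comp_size_gt0 P j.
have -> : x j - (\sum_(i | conn j i) side_sign P j i * x i) / comp_size P j =
    (\sum_(i | conn j i) (x j - side_sign P j i * x i)) / comp_size P j.
  rewrite sumrB; have -> : \sum_(i | conn j i) x j = comp_size P j * x j.
    by rewrite -(sum_comp_one P_sym bj) mulr_suml; under [RHS]eq_bigr do rewrite mul1r.
  by field; rewrite gt_eqF.
rewrite expr_div_n ler_pdivrMr ?exprn_gt0 // -(sum_comp_one P_sym bj) mulrC.
apply: sqr_sum_le => i ji; have [c jic] := conn_lift ji.
have := walk_bound x jic; rewrite (side_sign_walk P_sym bj jic) /lift_val /=.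
case: c {jic}; rewrite ?mulN1r ?mul1r ?opprK.
  by rewrite (_ : (x j + x i) ^+ 2 = (- x i - x j) ^+ 2) //; ring.
by rewrite (_ : (x j - x i) ^+ 2 = (x i - x j) ^+ 2) //; ring.
Qed.

End QuadraticForm.

Section Resolvent.
Variables (R : realFieldType) (n : nat) (P : 'M[R]_n).
Hypotheses (P_sym : P^T = P) (P_ge0 : forall i j, 0 <= P i j)
           (Delta_ge0 : forall i, 0 <= Delta P i).
Variables (alpha l t : R).
Hypotheses (alpha_gt0 : 0 < alpha) (l_ge0 : 0 <= l) (t_gt0 : 0 < t).

Notation M := (Smat n alpha l + t *: P).

Lemma resolvent_mulE m (X : 'M[R]_(n, m)) j k :
  (M *m X) j k = alpha * X j k + l * \sum_i X i k + t * \sum_i P j i * X i k.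
Proof.
rewrite /Smat !mulmxDl mul_scalar_mx -!scalemxAl !mxE.
by congr (_ + _ * _ + _ * _); apply: eq_bigr => i _; rewrite mxE mul1r.
Qed.

Lemma energy_identity m (X : 'M[R]_(n, m)) k :
  \sum_j X j k * (M *m X) j k =
  alpha * \sum_j X j k ^+ 2 + l * (\sum_j X j k) ^+ 2 + t * qform P (fun j => X j k).
Proof.
rewrite (eq_bigr (fun j => alpha * X j k ^+ 2 + l * (\sum_i X i k) * X j k
                           + t * \sum_i X j k * P j i * X i k)) => [|j _].
  by rewrite !big_split /= -!mulr_sumr expr2 mulrA.
have -> : \sum_i X j k * P j i * X i k = X j k * \sum_i P j i * X i k.
  by rewrite mulr_sumr; apply: eq_bigr => i _; rewrite mulrA.
by rewrite resolvent_mulE; ring.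
Qed.

Lemma energy_bounds m (X : 'M[R]_(n, m)) k :
  alpha * \sum_j X j k ^+ 2 <= \sum_j X j k * (M *m X) j k /\
  t * qform P (fun j => X j k) <= \sum_j X j k * (M *m X) j k.
Proof.
rewrite energy_identity; have Q0 := qform_ge0 P_sym P_ge0 Delta_ge0 (fun j => X j k).
have s0 : 0 <= l * (\sum_j X j k) ^+ 2 by rewrite mulr_ge0 ?sqr_ge0.
have V0 : 0 <= alpha * \sum_j X j k ^+ 2.
  by rewrite mulr_ge0 ?(ltW alpha_gt0) ?sumr_ge0 // => j _; apply: sqr_ge0.
have tQ0 : 0 <= t * qform P (fun j => X j k) by rewrite mulr_ge0 ?(ltW t_gt0).
by split; lra.
Qed.

(* S + tP is positive definite for t > 0, hence invertible. *)
Lemma resolvent_unit : M \in unitmx.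
Proof.
have M_sym : M^T = M.
  by apply/matrixP => i j; rewrite !mxE eq_sym (entry_sym P_sym).
set K := (kermx M)^T; have MK : M *m K = 0.
  by rewrite -{1}M_sym -trmx_mul mulmx_ker trmx0.
rewrite -row_free_unit -kermx_eq0; apply/eqP/trmx_inj; rewrite trmx0.
apply/matrixP => i k; rewrite [RHS]mxE; apply/eqP; rewrite -sqrf_eq0 eq_le sqr_ge0 andbT.
have [V_le _] := energy_bounds K k.
have E0 : \sum_j K j k * (M *m K) j k = 0.
  by rewrite MK; apply: big1 => j _; rewrite !mxE mulr0.
apply: le_trans (sqr_le_sum (fun j => K j k) i) _.
by rewrite -(pmulr_rle0 _ alpha_gt0) -[X in _ <= X]E0.
Qed.

(* With a = x . e for a column x of X, a = x . (x - Yx)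
   since e is orthogonal to Yx; Cauchy-Schwarz and residual_bound give
   a^2 <= n C |e|^2 x^T P x, and the energy identity closes the argument. *)
Lemma resolvent_bound m (X E : 'M[R]_(n, m)) : M *m X = E -> Ymat P *m E = 0 ->
  forall i k, alpha * t * X i k ^+ 2 <= n%:R * walk_const R n * \sum_j E j k ^+ 2.
Proof.
move=> MX YE i k; have [aV aQ] := energy_bounds X k; rewrite MX in aV aQ.
set a := \sum_j X j k * E j k in aV aQ.
set Q := qform P (fun j => X j k) in aQ.
set K := n%:R * walk_const R n * \sum_j E j k ^+ 2.
have Ye j : \sum_i Ymat P j i * E i k = 0.
  by move/matrixP/(_ j k): YE; rewrite mxE [RHS]mxE.
have a_res : a = \sum_j (X j k - \sum_i Ymat P j i * X i k) * E j k.
  under [RHS]eq_bigr do rewrite mulrBl.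
  by rewrite sumrB (sym_annihilated_dot (fun j => X j k) (Ymat_sym P_sym) Ye) subr0.
have a2 : a ^+ 2 <= K * Q.
  rewrite a_res; apply: le_trans (cauchy_schwarz _ _ _) _.
  rewrite (_ : K * Q = n%:R * walk_const R n * Q * \sum_j E j k ^+ 2); last first.
    by rewrite /K; ring.
  apply: ler_wpM2r; first by apply: sumr_ge0 => j _; apply: sqr_ge0.
  apply: le_trans (_ : \sum_(j < n) walk_const R n * Q <= _).
    by apply: ler_sum => j _; exact: (residual_bound P_sym P_ge0 Delta_ge0 (fun j => X j k)).
  by rewrite sumr_const card_ord mulr_natl -mulrnAl.
have K0 : 0 <= K.
  apply: mulr_ge0; last by apply: sumr_ge0 => j _; apply: sqr_ge0.
  by rewrite mulr_ge0 ?ler0n // /walk_const mulr_ge0 ?exprn_ge0.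
have V0 : 0 <= \sum_j X j k ^+ 2 by apply: sumr_ge0 => j _; apply: sqr_ge0.
apply: le_trans (energy_inequality alpha_gt0 t_gt0 V0 _ K0 aV aQ a2).
  apply: ler_wpM2l; first exact: mulr_ge0 (ltW alpha_gt0) (ltW t_gt0).
  exact: (sqr_le_sum (fun j => X j k)).
exact: qform_ge0.
Qed.

End Resolvent.

Lemma mx_lim_infty_rate (R : realFieldType) (n : nat) (f : R -> 'M[R]_n)
    (N : 'M[R]_n) (C : 'I_n -> 'I_n -> R) :
  (forall t, 0 < t -> forall i j, t * (f t i j - N i j) ^+ 2 <= C i j) ->
  mx_lim_infty f N.
Proof.
move=> rate eps eps_gt0; pose T := (\sum_i \sum_j `|C i j|) / eps ^+ 2.
have eps2_gt0 : 0 < eps ^+ 2 by rewrite exprn_gt0.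
have T_ge0 : 0 <= T.
  by rewrite divr_ge0 ?(ltW eps2_gt0) //; apply: sumr_ge0 => i _; apply: sumr_ge0.
exists T => t T_lt_t i j; have t_gt0 : 0 < t by apply: le_lt_trans T_lt_t.
have C_le_T : C i j <= T * eps ^+ 2.
  rewrite divfK ?gt_eqF //; apply: le_trans (ler_norm _) _.
  rewrite (bigD1 i) //= (bigD1 j) //= -addrA lerDl.
  by rewrite addr_ge0 ?sumr_ge0 // => k _; apply: sumr_ge0.
have : t * (f t i j - N i j) ^+ 2 < t * eps ^+ 2.
  by apply: le_lt_trans (rate t t_gt0 i j) (le_lt_trans C_le_T _); rewrite ltr_pM2r.
rewrite ltr_pM2l // => lt_sq.
by rewrite -ltr_sqr ?nnegrE ?normr_ge0 ?(ltW eps_gt0) // -normrX ger0_norm ?sqr_ge0.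
Qed.

Section SignlessLaplacian.
Variables (R : realFieldType) (n : nat) (P : 'M[R]_n).
Hypothesis P_lap : signless_laplacian P.

Local Notation Y := (Ymat P).
Local Notation y := (yvec P).

Lemma lap_sym : P^T = P.
Proof. by case: P_lap. Qed.

Lemma lap_ge0 i j : 0 <= P i j.
Proof.
case: P_lap => _ off diag _; case: (eqVneq i j) => [->|ij]; first exact: diag.
by case: (off _ _ ij) => ->.
Qed.

Lemma lap_Delta_ge0 i : 0 <= Delta P i.
Proof. by case: P_lap => _ _ _ /(_ i) [] ->. Qed.

(* P Y = 0: for a bipartite component C and the signed indicator w of C,
   (P w)_j = Delta_j w_j + sum_{i <> j} P_ji (w_j + w_i), and every term vanishes
   since C has no loop and edges join opposite sides. *)
Lemma lap_Ymat : P *m Ymat P = 0.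
Proof.
have P_sym := lap_sym; apply/matrixP => j k; rewrite mxE [RHS]mxE.
have Y_entry i : Ymat P i k = Ymat P k i by rewrite -{1}(Ymat_sym P_sym) mxE.
under eq_bigr => i _ do rewrite Y_entry mulrC.
rewrite Ymat_row_sum; case: ifP => // bk.
pose w i : R := if connect (gadj P) k i then side_sign P k i else 0.
suff Pw : \sum_i P j i * w i = 0.
  rewrite big_mkcond (eq_bigr (fun i => P j i * w i)) ?Pw ?mul0r // => i _.
  by rewrite /w; case: ifP; rewrite ?mulr0 // mulrC.
have Pjj : P j j = Delta P j + \sum_(i | i != j) P j i by rewrite (DeltaE lap_ge0) subrK.
rewrite (bigD1 j) //= Pjj mulrDl big_distrl -addrA -big_split /=.
have no_loop : Delta P j * w j = 0.
  rewrite /w; case: ifP => kj; last by rewrite mulr0.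
  case: P_lap => _ _ _ /(_ j) [-> | D2]; first by rewrite mul0r.
  by move: (bip_no_loop P_sym bk kj); rewrite /gloop D2 eqxx.
rewrite no_loop add0r big1 // => i; rewrite eq_sym => ji.
case: P_lap => _ /(_ j i ji) [-> | Pji] _ _; first by rewrite !mul0r addr0.
have edge : gadj P j i by rewrite /gadj ji Pji eqxx.
rewrite Pji !mul1r /w.
have -> : connect (gadj P) k i = connect (gadj P) k j.
  apply/idP/idP => [ki | kj]; last exact: connect_trans kj (connect1 edge).
  by apply: connect_trans ki (connect1 _); rewrite gadj_sym.
case: ifP => kj; last by rewrite addr0.
by rewrite (side_sign_edge P_sym bk kj edge) addrN.
Qed.

Definition limit_mx (alpha l : R) : 'M[R]_n :=
  alpha^-1 *: Ymat P - (l / (alpha * (alpha + l * gammaP P))) *: (yvec P *m (yvec P)^T).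

(* P N = 0, since N is built from Y and y = Y 1 and P Y = 0. *)
Lemma lap_limit alpha l : P *m limit_mx alpha l = 0.
Proof.
rewrite mulmxBr -!scalemxAr mulmxA -(Ymat_ones lap_sym) mulmxA lap_Ymat.
by rewrite !mul0mx !scaler0 subrr.
Qed.

(* Y S N = Y; this is where the denominator alpha + l gamma comes from. *)
Lemma Ymat_limit alpha l : alpha != 0 -> alpha + l * gammaP P != 0 ->
  Ymat P *m (Smat n alpha l *m limit_mx alpha l) = Ymat P.
Proof.
move=> alpha_neq0 den_neq0; have P_sym := lap_sym.
set u := const_mx 1 : 'cV[R]_n; set b := l / (alpha * (alpha + l * gammaP P)).
have ones_mx : const_mx 1 = u *m u^T.
  by apply/matrixP => i j; rewrite !mxE big_ord1 !mxE mulr1.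
have uY : u^T *m Y = y^T by rewrite -(Ymat_ones P_sym) trmx_mul Ymat_sym.
have uy : u^T *m y = (gammaP P)%:M.
  apply/matrixP => ? ?; rewrite !ord1 !mxE eqxx mulr1n -(sum_yvec P_sym).
  by apply: eq_bigr => j _; rewrite !mxE mul1r.
have YS : Y *m Smat n alpha l = alpha *: Y + l *: (y *m u^T).
  by rewrite /Smat mulmxDr mul_mx_scalar -scalemxAr ones_mx mulmxA Ymat_ones.
have yuY : y *m u^T *m Y = y *m y^T by rewrite -mulmxA uY.
have yuyy : y *m u^T *m (y *m y^T) = gammaP P *: (y *m y^T).
  by rewrite mulmxA -(mulmxA y) uy mul_mx_scalar scalemxAl.
have Yy : Y *m y = y by rewrite -(Ymat_ones P_sym) mulmxA Ymat_idem.
have Yyy : Y *m (y *m y^T) = y *m y^T by rewrite mulmxA Yy.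
rewrite mulmxA YS mulmxDl !mulmxBr -!scalemxAl -!scalemxAr Ymat_idem // yuY yuyy Yyy.
rewrite !scalerA (_ : l * alpha^-1 = alpha * b + l * (b * gammaP P)); last first.
  by rewrite /b; field; rewrite alpha_neq0 den_neq0.
by rewrite mulfV // scale1r scalerDl mulrA -/b addrK subrK.
Qed.

Lemma resolvent_error alpha l t : (Smat n alpha l + t *: P) \in unitmx ->
  (Smat n alpha l + t *: P) *m (invmx (Smat n alpha l + t *: P) - limit_mx alpha l)
  = 1%:M - Smat n alpha l *m limit_mx alpha l.
Proof.
move=> M_unit; rewrite mulmxBr mulmxV // mulmxDl -scalemxAl lap_limit.
by rewrite scaler0 addr0.
Qed.

End SignlessLaplacian.

Lemma gammaP_ge0 (R : realFieldType) (n : nat) (P : 'M[R]_n) : 0 <= gammaP P.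
Proof.
by apply: sumr_ge0 => i _; rewrite divr_ge0 ?sqr_ge0 ?addr_ge0 ?ler0n.
Qed.

Theorem proposition4p8 (R : realFieldType) (n : nat) (l alpha : R) (P : 'M[R]_n) :
  (3 <= n)%N -> 0 < l -> (n - 2)%:R * l <= alpha ->
  signless_laplacian P ->
  (exists T : R, forall t : R, T < t -> Smat n alpha l + t *: P \in unitmx) /\
  mx_lim_infty (fun t => invmx (Smat n alpha l + t *: P))
    (alpha^-1 *: Ymat P
     - (l / (alpha * (alpha + l * gammaP P))) *: (yvec P *m (yvec P)^T)).
Proof.
move=> n_ge3 l_gt0 alpha_ge P_lap.
have alpha_gt0 : 0 < alpha.
  have : 1 <= (n - 2)%:R :> R by rewrite ler1n subn_gt0.
  by nra.
have P_sym := lap_sym P_lap; have P_ge0 := lap_ge0 P_lap.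
have Delta_ge0 := lap_Delta_ge0 P_lap.
have M_unit t : 0 < t -> Smat n alpha l + t *: P \in unitmx.
  by move=> t_gt0; apply: (resolvent_unit P_sym P_ge0 Delta_ge0 alpha_gt0 (ltW l_gt0)).
split; first by exists 0.
have den_gt0 : 0 < alpha + l * gammaP P.
  by have := mulr_ge0 (ltW l_gt0) (gammaP_ge0 P); lra.
pose E := 1%:M - Smat n alpha l *m limit_mx P alpha l.
have YE : Ymat P *m E = 0.
  by rewrite mulmxBr mulmx1 Ymat_limit ?gt_eqF // subrr.
apply: (@mx_lim_infty_rate _ _ _ _
  (fun i j => n%:R * walk_const R n * (\sum_k E k j ^+ 2) / alpha)) => t t_gt0 i j.
have := resolvent_bound P_sym P_ge0 Delta_ge0 alpha_gt0 (ltW l_gt0) t_gt0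
          (resolvent_error P_lap (M_unit t t_gt0)) YE i j.
have sub_entry (A B : 'M[R]_n) : (A - B) i j = A i j - B i j by rewrite !mxE.
rewrite (sub_entry _ (limit_mx P alpha l)) => bound.
by rewrite ler_pdivlMr // (mulrC _ alpha) [alpha * (t * _)]mulrA.
Qed.
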